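(* The vectors $\{\Lambda_1,\dots,\Lambda_d\}$ form a basis for the space $\Psi^{-1}(\mathcal{D}\cap (I_{\mathcal{C}})_2)$.
   Context: Let $P_d$ be a convex polygon with $d\ge 4$ vertices $v_1,\dots,v_d$ (indices mod $d$) over a field $\mathbb{K}$ with no three edge lines concurrent. Set ${\bf v}_i=(v_i,1)$, ${\bf n}_i={\bf v}_i\times{\bf v}_{i+1}$, $\alpha_j=|{\bf v}_{j-1}\,{\bf v}_j\,{\bf v}_{j+1}|$. In $S=\mathbb{K}[x_1,\ldots,x_d]$ let $\tau=\sum_i x_i{\bf v}_i$, $I_{\mathcal{C}}=\langle\tau_1,\tau_2,\tau_3\rangle$, $\mathcal{D}\subseteq S_2$ the span of diagonal monomials $x_ix_j$ ($j\notin\{i-1,i,i+1\}$), $\Psi:S_1^3\to(I_{\mathcal{C}})_2$ the map $F\mapsto F\cdot\tau$ (scalar product), and $\Lambda_k=\frac{x_{k+1}}{\alpha_{k+1}}{\bf n}_{k+1}-\frac{x_k}{\alpha_k}{\bf n}_{k-1}\in S_1^3$. *)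

From mathcomp Require Import all_boot all_order all_algebra.
From mathcomp Require Import mpoly.
Set Implicit Arguments. Unset Strict Implicit. Unset Printing Implicit Defensive.
Import Order.TTheory GRing.Theory Num.Theory.
Local Open Scope ring_scope.

(* Vertices are indexed by 'I_d (paper: 1..d), indices taken mod d. *)
Definition isucc d (i : 'I_d) : 'I_d := ordS i.
Definition ipred d (i : 'I_d) : 'I_d := ord_pred i.

Section Poly.
Variable K : realFieldType.

Definition hvec (p : K * K) : 'rV[K]_3 :=
  \row_(c < 3) (if c == 0 :> nat then p.1 else if c == 1 :> nat then p.2 else 1).

Definition cross (a b : 'rV[K]_3) : 'rV[K]_3 :=
  \row_(c < 3)
    (if c == 0 :> nat then a 0 1%:R * b 0 2%:R - a 0 2%:R * b 0 1%:R
     else if c == 1 :> nat then a 0 2%:R * b 0 0 - a 0 0 * b 0 2%:R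
     else a 0 0 * b 0 1%:R - a 0 1%:R * b 0 0).

Definition det3 (a b c : 'rV[K]_3) : K :=
  \det (\matrix_(i < 3, j < 3)
          (if i == 0 :> nat then a 0 j else if i == 1 :> nat then b 0 j else c 0 j)).

Variable d : nat.
Variable v : 'I_d -> K * K.

Definition vb (i : 'I_d) : 'rV[K]_3 := hvec (v i).
Definition nvec (i : 'I_d) : 'rV[K]_3 := cross (vb i) (vb (isucc i)).
Definition alpha (j : 'I_d) : K := det3 (vb (ipred j)) (vb j) (vb (isucc j)).

(* strictly convex polygon with vertices v_1..v_d listed in cyclic order:
   for every edge, all other vertices lie strictly on one and the same side
   (the side being the same for all edges, i.e. a fixed orientation) *)
Definition convex_polygon : Prop :=
  exists s : K, (s = 1 \/ s = -1) /\
    forall i j : 'I_d, j != i -> j != isucc i ->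
      0 < s * det3 (vb i) (vb (isucc i)) (vb j).

(* no three edge lines concurrent (projectively: |n_i n_j n_k| <> 0) *)
Definition no_three_concurrent : Prop :=
  forall i j k : 'I_d, i != j -> j != k -> i != k ->
    det3 (nvec i) (nvec j) (nvec k) != 0.

Notation S := {mpoly K[d]}.

Definition tau (c : 'I_3) : S := \sum_(i < d) (vb i 0 c) *: 'X_i.

Definition Psi (F : 'I_3 -> S) : S := \sum_(c < 3) F c * tau c.

Definition linear_form (p : S) : Prop :=
  exists a : 'I_d -> K, p = \sum_(i < d) a i *: 'X_i.

Definition in_S1_3 (F : 'I_3 -> S) : Prop := forall c, linear_form (F c).

Definition quadratic_form (p : S) : Prop :=
  exists b : 'I_d -> 'I_d -> K,
    p = \sum_(i < d) \sum_(j < d) b i j *: ('X_i * 'X_j).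

Definition in_IC (p : S) : Prop :=
  exists g : 'I_3 -> S, p = \sum_(c < 3) g c * tau c.
Definition in_IC2 (p : S) : Prop := quadratic_form p /\ in_IC p.

Definition diagonal_pair (i j : 'I_d) : bool :=
  [&& j != ipred i, j != i & j != isucc i].

Definition in_D (p : S) : Prop :=
  exists b : 'I_d -> 'I_d -> K,
    p = \sum_(i < d) \sum_(j < d | diagonal_pair i j) b i j *: ('X_i * 'X_j).

(* the space Psi^{-1}(D cap (I_C)_2) inside S_1^3 *)
Definition in_V (F : 'I_3 -> S) : Prop :=
  in_S1_3 F /\ in_D (Psi F) /\ in_IC2 (Psi F).

Definition Lambda (k : 'I_d) (c : 'I_3) : S :=
  (nvec (isucc k) 0 c / alpha (isucc k)) *: 'X_(isucc k)
  - (nvec (ipred k) 0 c / alpha k) *: 'X_k.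

Definition lincomb (a : 'I_d -> K) (c : 'I_3) : S :=
  \sum_(k < d) a k *: Lambda k c.

Definition Lambda_basis : Prop :=
  (forall k, in_V (Lambda k)) /\
  (forall a : 'I_d -> K, (forall c, lincomb a c = 0) -> forall k, a k = 0) /\
  (forall F, in_V F -> exists a : 'I_d -> K, forall c, F c = lincomb a c).

End Poly.

From mathcomp Require Import all_boot all_order all_algebra.
From mathcomp Require Import mpoly ring zify.
Import Order.TTheory GRing.Theory Num.Theory.
Set Implicit Arguments. Unset Strict Implicit. Unset Printing Implicit Defensive.
Local Open Scope ring_scope.

(* Write a triple of linear forms as F_c = sum_i A_i[c] x_i with rows
   A_i in K^3.  Then Psi F = sum_(i,j) (A_i . v_j) x_i x_j, so F lies in
   Psi^-1(D) (and automatically in Psi^-1(I_C)) iff A_i . v_i = 0 and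
   A_i . v_(i+1) + A_(i+1) . v_i = 0 for all i.  Convexity makes
   v_(i-1), v_i, v_(i+1) a basis of K^3 (alpha_i <> 0), so by Cramer's rule
   A_i is determined by A_i . v_(i-1) and A_i . v_(i+1), i.e. by the d
   numbers b_k = A_(k+1) . v_k; the resulting formula is exactly
   F = sum_k b_k Lambda_k.  Coefficients of polynomials are read off by
   evaluating at 0/1-points. *)

Lemma val_isucc d (i : 'I_d) : val (isucc i) = if (i.+1 < d)%N then i.+1 else 0%N.
Proof.
case: i => i hi /=; case: ltnP => h; first by rewrite modn_small.
have -> : i.+1 = d by lia.
by rewrite modnn.
Qed.

Lemma isuccK d : cancel (@isucc d) (@ipred d). Proof. exact: ordSK. Qed.
Lemma ipredK d : cancel (@ipred d) (@isucc d). Proof. exact: ord_predK. Qed.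

Lemma isucc_neq d (i : 'I_d) : (1 < d)%N -> isucc i != i.
Proof.
move=> hd; apply/eqP=> /(congr1 val); rewrite val_isucc /=.
have := ltn_ord i; case: (ltnP i.+1 d); lia.
Qed.

Lemma isucc_neq_ipred d (i : 'I_d) : (2 < d)%N -> isucc i != ipred i.
Proof.
move=> hd; rewrite -(inj_eq (@ordS_inj d)) /ipred ord_predK; apply/eqP=> /(congr1 val).
rewrite -/(isucc _) !val_isucc /=.
have := ltn_ord i; case: (ltnP i.+1 d) => /=; rewrite ?val_isucc;
  [case: (ltnP i.+2 d) | case: (ltnP 1 d)]; lia.
Qed.

Section Vec3.
Variable K : realFieldType.
Implicit Types a b u w z f : 'rV[K]_3.

Definition dot a b : K := \sum_(k < 3) a 0 k * b 0 k.

(* Entries addressed by a natural number, so that a case split on an index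
   of ['I_3] produces syntactically equal terms that [ring] can match. *)
Definition rv3 a (n : nat) : K := a 0 (inord n).

Lemma rv3E a (k : 'I_3) : a 0 k = rv3 a k.
Proof. by rewrite /rv3 inord_val. Qed.

Lemma det3E a b z : det3 a b z =
    rv3 a 0 * (rv3 b 1 * rv3 z 2 - rv3 b 2 * rv3 z 1)
  - rv3 a 1 * (rv3 b 0 * rv3 z 2 - rv3 b 2 * rv3 z 0)
  + rv3 a 2 * (rv3 b 0 * rv3 z 1 - rv3 b 1 * rv3 z 0).
Proof.
rewrite /det3 !(expand_det_row _ 0) !big_ord_recl !big_ord0 /cofactor /=.
rewrite !(expand_det_row _ 0) !big_ord_recl !big_ord0 /cofactor /=.
by rewrite !det_mx11 !mxE /= !rv3E /=; ring.
Qed.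

Lemma crossE a b :
  [/\ rv3 (cross a b) 0 = rv3 a 1 * rv3 b 2 - rv3 a 2 * rv3 b 1,
      rv3 (cross a b) 1 = rv3 a 2 * rv3 b 0 - rv3 a 0 * rv3 b 2 &
      rv3 (cross a b) 2 = rv3 a 0 * rv3 b 1 - rv3 a 1 * rv3 b 0].
Proof.
have e0 : (inord 0 : 'I_3) = 0 by apply/val_inj; rewrite /= inordK.
have e1 : (inord 1 : 'I_3) = 1 by apply/val_inj; rewrite /= inordK.
have e2 : (inord 2 : 'I_3) = 2%:R by apply/val_inj; rewrite /= inordK.
by rewrite /rv3 /cross !mxE !inordK //= e0 e1 e2.
Qed.

Lemma dotE a b : dot a b = rv3 a 0 * rv3 b 0 + rv3 a 1 * rv3 b 1 + rv3 a 2 * rv3 b 2.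
Proof. by rewrite /dot !big_ord_recl big_ord0 !rv3E /= addr0 addrA. Qed.

Lemma dotBl a b w : dot (a - b) w = dot a w - dot b w.
Proof. by rewrite /dot -sumrB; apply: eq_bigr => k _; rewrite !mxE mulrBl. Qed.

Lemma dotZl (x : K) a w : dot (x *: a) w = x * dot a w.
Proof. by rewrite /dot mulr_sumr; apply: eq_bigr => k _; rewrite !mxE mulrA. Qed.

Lemma dot_crossE a b z : dot (cross a b) z = det3 a b z.
Proof. by rewrite dotE det3E; case: (crossE a b) => -> -> ->; ring. Qed.

Lemma det3_rotate a b z : det3 a b z = det3 b z a.
Proof. by rewrite !det3E; ring. Qed.

Lemma det3_rep13 a b : det3 a b a = 0.
Proof. by rewrite det3E; ring. Qed.

Lemma det3_rep23 a b : det3 a b b = 0.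
Proof. by rewrite det3E; ring. Qed.

(* Cramer's rule: the cross products of a basis are dual to it up to the
   factor [det3 u w z]. *)
Lemma det3_expansion u w z f : det3 u w z *: f =
  dot f u *: cross w z + dot f w *: cross z u + dot f z *: cross u w.
Proof.
apply/rowP => k; rewrite !mxE !dotE det3E !rv3E.
case: (crossE w z) => e1 e2 e3; case: (crossE z u) => e4 e5 e6.
case: (crossE u w) => e7 e8 e9.
by case: k => [[|[|[|k]]] hk] //=; rewrite ?e1 ?e2 ?e3 ?e4 ?e5 ?e6 ?e7 ?e8 ?e9; ring.
Qed.

End Vec3.

Section Forms.
Variables (K : realFieldType) (d : nat).
Notation S := {mpoly K[d]}.

Definition indicator (s : {set 'I_d}) : 'I_d -> K := fun k => (k \in s)%:R.

Lemma meval_sum (x : 'I_d -> K) (I : Type) (r : seq I) (P : pred I) (F : I -> S) :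
  (\sum_(i <- r | P i) F i).@[x] = \sum_(i <- r | P i) (F i).@[x].
Proof. exact: (big_morph _ (mevalD x) (meval0 x)). Qed.

Lemma meval_linear_form (x a : 'I_d -> K) :
  (\sum_i a i *: 'X_i : S).@[x] = \sum_i a i * x i.
Proof. by rewrite meval_sum; apply: eq_bigr => i _; rewrite mevalZ mevalXU. Qed.

Lemma linear_form_eq0 (a : 'I_d -> K) k : \sum_i a i *: 'X_i = 0 :> S -> a k = 0.
Proof.
move=> /(congr1 (meval (indicator [set k]))).
rewrite meval_linear_form meval0 (bigD1 k) //= big1 => [|i ik].
  by rewrite /indicator set11 mulr1 addr0.
by rewrite /indicator in_set1 (negbTE ik) mulr0.
Qed.

Lemma meval_quadratic_form_indicator (C : 'I_d -> 'I_d -> K) (s : {set 'I_d}) :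
  (\sum_i \sum_j C i j *: ('X_i * 'X_j) : S).@[indicator s]
  = \sum_(i in s) \sum_(j in s) C i j.
Proof.
rewrite meval_sum [RHS]big_mkcond; apply: eq_bigr => i _ /=.
rewrite meval_sum [in RHS]big_mkcond /=.
have eX j : ('X_i * 'X_j : S).@[indicator s] = (i \in s)%:R * (j \in s)%:R.
  by rewrite mevalM !mevalXU.
case: (boolP (i \in s)) => si; last first.
  by apply: big1 => j _; rewrite mevalZ eX (negbTE si) mul0r mulr0.
apply: eq_bigr => j _; rewrite mevalZ eX si mul1r.
by case: (j \in s); rewrite ?mulr1 ?mulr0.
Qed.

Lemma in_D_meval_indicator (p : S) (s : {set 'I_d}) : in_D p ->
  (forall i j, i \in s -> j \in s -> ~~ diagonal_pair i j) ->
  p.@[indicator s] = 0.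
Proof.
move=> [b ->] hs; rewrite meval_sum big1 // => i _.
rewrite meval_sum big1 // => j dij; rewrite mevalZ mevalM !mevalXU /indicator.
case: (boolP (i \in s)) => si; last by rewrite mul0r mulr0.
case: (boolP (j \in s)) => sj; last by rewrite !mulr0.
by move: (hs i j si sj); rewrite dij.
Qed.

Lemma in_S1_3_coef (F : 'I_3 -> S) : in_S1_3 F ->
  exists A : 'I_d -> 'rV[K]_3, forall c, F c = \sum_i A i 0 c *: 'X_i.
Proof.
move=> hF; have [a ha] := fin_all_exists hF.
by exists (fun i => \row_c a c i) => c; rewrite ha; apply: eq_bigr => i _; rewrite mxE.
Qed.

End Forms.

Section Polygon.
Variables (K : realFieldType) (d : nat) (v : 'I_d -> K * K).
Hypotheses (d_gt2 : (2 < d)%N) (convex : convex_polygon v).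
Notation S := {mpoly K[d]}.
Notation vb := (vb v).

Lemma alpha_neq0 i : alpha v i != 0.
Proof.
have [s [_ hs]] := convex.
have := hs (ipred i) (isucc i) (isucc_neq_ipred i d_gt2).
rewrite ipredK => /(_ (isucc_neq i (ltnW d_gt2))).
by apply: contraTneq => h; rewrite /alpha in h; rewrite h mulr0 ltxx.
Qed.

Lemma Psi_linear (A : 'I_d -> 'rV[K]_3) (F : 'I_3 -> S) :
  (forall c, F c = \sum_i A i 0 c *: 'X_i) ->
  Psi v F = \sum_i \sum_j dot (A i) (vb j) *: ('X_i * 'X_j).
Proof.
move=> hF; rewrite /Psi /tau.
under eq_bigr do rewrite hF mulr_suml.
under eq_bigr do under eq_bigr do rewrite mulr_sumr.
rewrite exchange_big /=; apply: eq_bigr => i _.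
rewrite exchange_big /=; apply: eq_bigr => j _.
rewrite scaler_suml; apply: eq_bigr => c _.
by rewrite -scalerAl -scalerAr scalerA.
Qed.

Lemma quadratic_form_in_D (C : 'I_d -> 'I_d -> K) :
  (forall i, C i i = 0) -> (forall i, C i (isucc i) + C (isucc i) i = 0) ->
  in_D (\sum_i \sum_j C i j *: ('X_i * 'X_j) : S).
Proof.
move=> C_ii C_adj; exists C.
have split_row i : \sum_j C i j *: ('X_i * 'X_j : S) =
    \sum_(j | diagonal_pair i j) C i j *: ('X_i * 'X_j)
  + (C i (isucc i) *: ('X_i * 'X_(isucc i)) + C i (ipred i) *: ('X_i * 'X_(ipred i))).
  rewrite (bigID (diagonal_pair i)) /=; congr (_ + _).
  rewrite (bigD1 (isucc i)) /=; last by rewrite /diagonal_pair eqxx !andbF.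
  rewrite (bigD1 (ipred i)) /=; last first.
    by rewrite /diagonal_pair eqxx /= eq_sym (isucc_neq_ipred i d_gt2).
  rewrite big1 ?addr0 // => j /andP[/andP[hnd hs] hp].
  move: hnd; rewrite /diagonal_pair hs hp andbT negbK => /eqP ->.
  by rewrite C_ii scale0r.
under eq_bigr do rewrite split_row.
rewrite big_split /= -[RHS]addr0; congr (_ + _); rewrite big_split /=.
have -> : \sum_i C i (ipred i) *: ('X_i * 'X_(ipred i) : S) =
    \sum_i C (isucc i) i *: ('X_i * 'X_(isucc i)).
  rewrite [LHS](reindex_inj (@ordS_inj d)); apply: eq_bigr => i _.
  by rewrite isuccK mulrC.
by rewrite -big_split big1 // => i _ /=; rewrite -scalerDl C_adj scale0r.
Qed.

(* The space V is cut out by linear conditions on the coefficient rows [A i]: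
   [x_i^2] and [x_i x_(i+1)] do not occur in [Psi F]. *)
Lemma in_V_coefP (A : 'I_d -> 'rV[K]_3) (F : 'I_3 -> S) :
  (forall c, F c = \sum_i A i 0 c *: 'X_i) ->
  in_V v F <-> (forall i, dot (A i) (vb i) = 0) /\
               (forall i, dot (A i) (vb (isucc i)) + dot (A (isucc i)) (vb i) = 0).
Proof.
move=> hF; have hPsi := Psi_linear hF.
split=> [[_ [hD _]]|[C_ii C_adj]]; last first.
  split; first by move=> c; exists (fun i => A i 0 c).
  rewrite hPsi; split; first exact: quadratic_form_in_D.
  by split; [exists (fun i j => dot (A i) (vb j)) | exists F].
have ev (s : {set 'I_d}) : (forall i j, i \in s -> j \in s -> ~~ diagonal_pair i j) ->
    \sum_(i in s) \sum_(j in s) dot (A i) (vb j) = 0.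
  move=> hs; rewrite -[RHS](in_D_meval_indicator hD hs) hPsi.
  by rewrite meval_quadratic_form_indicator.
have C_ii i : dot (A i) (vb i) = 0.
  rewrite -(ev [set i]) ?big_set1 // => j k; rewrite !in_set1 => /eqP-> /eqP->.
  by rewrite /diagonal_pair eqxx andbF.
split=> // i; have ni : i \notin [set isucc i].
  by rewrite in_set1 eq_sym isucc_neq // ltnW.
rewrite -[RHS](ev [set i; isucc i]); last first.
  by move=> j k; rewrite !inE => /orP[]/eqP-> /orP[]/eqP->;
    rewrite /diagonal_pair ?isuccK eqxx /= ?andbF.
rewrite (big_setU1 _ ni) big_set1 /= (big_setU1 _ ni) (big_setU1 _ ni) !big_set1.
by rewrite /= !C_ii add0r addr0.
Qed.

Definition lambda_coef (b : 'I_d -> K) (i : 'I_d) : 'rV[K]_3 :=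
  (b (ipred i) / alpha v i) *: nvec v i - (b i / alpha v i) *: nvec v (ipred i).

Lemma lambda_coefE b i c : lambda_coef b i 0 c =
  b (ipred i) * (nvec v i 0 c / alpha v i) - b i * (nvec v (ipred i) 0 c / alpha v i).
Proof.
rewrite /lambda_coef; move: (nvec v i) (nvec v (ipred i)) => n n'.
by rewrite !mxE; ring.
Qed.

Lemma lincombE b c : lincomb v b c = \sum_i lambda_coef b i 0 c *: 'X_i.
Proof.
rewrite /lincomb /Lambda; under eq_bigr do rewrite scalerBr.
rewrite sumrB; set G := fun i => (b (ipred i) * (nvec v i 0 c / alpha v i)) *: ('X_i : S).
have -> : \sum_k b k *: ((nvec v (isucc k) 0 c / alpha v (isucc k)) *: 'X_(isucc k))
    = \sum_k G k :> S.
  rewrite [RHS](reindex_inj (@ordS_inj d)).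
  by apply: eq_bigr => k _; rewrite /G scalerA isuccK.
rewrite -sumrB; apply: eq_bigr => i _.
rewrite /G scalerA -scalerBl; congr (_ *: _); rewrite lambda_coefE; ring.
Qed.

Lemma dot_lambda_coef b i w : dot (lambda_coef b i) w =
  (b (ipred i) * det3 (vb i) (vb (isucc i)) w
   - b i * det3 (vb (ipred i)) (vb i) w) / alpha v i.
Proof. by rewrite /lambda_coef dotBl !dotZl /nvec !dot_crossE ipredK; ring. Qed.

Lemma dot_lambda_coef_self b i : dot (lambda_coef b i) (vb i) = 0.
Proof. by rewrite dot_lambda_coef det3_rep13 det3_rep23 !mulr0 subrr mul0r. Qed.

Lemma dot_lambda_coef_succ b i : dot (lambda_coef b i) (vb (isucc i)) = - b i.
Proof.
by rewrite dot_lambda_coef det3_rep23 mulr0 sub0r mulNr mulfK ?alpha_neq0.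
Qed.

Lemma dot_lambda_coef_pred b i : dot (lambda_coef b (isucc i)) (vb i) = b i.
Proof.
rewrite dot_lambda_coef isuccK det3_rep13 mulr0 subr0 -det3_rotate.
have -> : det3 (vb i) (vb (isucc i)) (vb (isucc (isucc i))) = alpha v (isucc i).
  by rewrite /alpha isuccK.
by rewrite mulfK ?alpha_neq0.
Qed.

Lemma lincomb_in_V b F : (forall c, F c = lincomb v b c) -> in_V v F.
Proof.
move=> hF; apply/(in_V_coefP (A := lambda_coef b)) => [c|]; first by rewrite hF lincombE.
split=> i; first exact: dot_lambda_coef_self.
by rewrite dot_lambda_coef_succ dot_lambda_coef_pred addNr.
Qed.

Lemma lincomb_delta k c : lincomb v (fun j => (j == k)%:R) c = Lambda v k c.
Proof.
rewrite /lincomb (bigD1 k) //= eqxx scale1r big1 ?addr0 // => j /negbTE ->.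
by rewrite scale0r.
Qed.

Lemma lincomb_eq0 b : (forall c, lincomb v b c = 0) -> forall k, b k = 0.
Proof.
move=> hb k; apply: oppr_inj; rewrite oppr0 -(dot_lambda_coef_succ b k) /dot.
apply: big1 => c _; have := hb c; rewrite lincombE => /(@linear_form_eq0 _ _ _ k) ->.
exact: mul0r.
Qed.

Lemma coef_eq_lambda_coef (A : 'I_d -> 'rV[K]_3) :
  (forall i, dot (A i) (vb i) = 0) ->
  (forall i, dot (A i) (vb (isucc i)) + dot (A (isucc i)) (vb i) = 0) ->
  forall i, A i = lambda_coef (fun k => dot (A (isucc k)) (vb k)) i.
Proof.
move=> A_ii A_adj i; apply: (scalerI (alpha_neq0 i)).
rewrite {1}/alpha det3_expansion A_ii scale0r addr0 /lambda_coef /nvec ipredK.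
have -> : dot (A (isucc i)) (vb i) = - dot (A i) (vb (isucc i)).
  by apply/eqP; rewrite -addr_eq0 addrC A_adj.
rewrite scalerBr !scalerA !(mulrC (alpha v i)) !divfK ?alpha_neq0 //.
by rewrite scaleNr opprK.
Qed.

Lemma in_V_is_lincomb F : in_V v F -> exists b, forall c, F c = lincomb v b c.
Proof.
move=> hV; have [A hA] := in_S1_3_coef hV.1.
have [A_ii A_adj] := (in_V_coefP hA).1 hV.
exists (fun k => dot (A (isucc k)) (vb k)) => c; rewrite hA lincombE.
by apply: eq_bigr => i _; rewrite {1}(coef_eq_lambda_coef A_ii A_adj i).
Qed.

End Polygon.

Theorem lemma3p6 (K : realFieldType) (d : nat) (v : 'I_d -> K * K) :
  (4 <= d)%N ->
  convex_polygon v ->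
  no_three_concurrent v ->
  Lambda_basis v.
Proof.
(* Convexity alone gives alpha_i <> 0. *)
move=> d_ge4 convex _; have d_gt2 : (2 < d)%N by exact: ltnW.
split; [|split].
- move=> k; apply: (lincomb_in_V d_gt2 convex (b := fun j => (j == k)%:R)) => c.
  by rewrite lincomb_delta.
- exact: lincomb_eq0.
- exact: in_V_is_lincomb.
Qed.
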